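(* Let $n,k,m$ be positive integers with $\frac32k<m<2k$, $2m-3k$ odd, and $\operatorname{lcm}(4m-6k,\,4k-2m)\mid n$. Then $$N_P(n,k,m)\le \frac{3k-m+1}{2}\,n.$$
   Context: Fix a finite field $\mathbb{F}_q$; $[n]=\{1,\dots,n\}$. An $(n,N,k,m)$-PIR array code over $\mathbb{F}_q$ is an $\mathbb{F}_q$-linear map $\mathbf x\in\mathbb{F}_q^n\mapsto(\mathbf c_1,\dots,\mathbf c_m)$ with buckets $\mathbf c_\ell\in\mathbb{F}_q^{N_\ell}$, $N_\ell\ge1$ independent of $\mathbf x$, $\sum_\ell N_\ell=N$, such that for each $i\in[n]$ there is a partition of $[m]$ into $k$ sets $R_1,\dots,R_k$ such that for each $j$, $x_i$ is an $\mathbb{F}_q$-linear combination of values $f_\ell(\mathbf c_\ell)$, $\ell\in R_j$, for some linear functionals $f_\ell:\mathbb{F}_q^{N_\ell}\to\mathbb{F}_q$ (independent of $\mathbf x$). $N_P(n,k,m)$ is the minimum $N$ for which such a code exists. *)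

From HB Require Import structures.
From mathcomp Require Import all_boot all_order all_algebra all_field.
Set Implicit Arguments. Unset Strict Implicit. Unset Printing Implicit Defensive.
Import GRing.Theory.
Local Open Scope ring_scope.

(* Bucket l (l : 'I_m) has size Nb l and its content is the image of the
   data row vector x : 'rV_n under the linear map x |-> x *m G l,
   with G l : 'M_(n, Nb l) (every linear map F^n -> F^(Nb l) is of this form).
   A linear functional f_l : F^(Nb l) -> F is represented by a column vector
   f l : 'cV_(Nb l), acting as c |-> (c *m f l) 0 0. *)

Definition PIR_recovers (F : finFieldType) (n k m : nat) (Nb : 'I_m -> nat)
    (G : forall l : 'I_m, 'M[F]_(n, Nb l)) (i : 'I_n) : Prop :=
  exists P : {set {set 'I_m}},
    [/\ partition P [set: 'I_m], #|P| = k &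
    exists f : forall l : 'I_m, 'cV[F]_(Nb l),
      forall R, R \in P ->
        exists a : 'I_m -> F,
          forall x : 'rV[F]_n,
            x 0 i = \sum_(l in R) a l * ((x *m G l) *m f l) 0 0].

Definition is_PIR_array_code (F : finFieldType) (n k m : nat)
    (Nb : 'I_m -> nat) (G : forall l : 'I_m, 'M[F]_(n, Nb l)) : Prop :=
  (forall l, (0 < Nb l)%N) /\ (forall i : 'I_n, PIR_recovers k G i).

Definition total_size (m : nat) (Nb : 'I_m -> nat) : nat := (\sum_(l < m) Nb l)%N.

From HB Require Import structures.
From mathcomp Require Import all_boot all_order all_algebra all_field.
From mathcomp Require Import mxtens zify ring.
Set Implicit Arguments. Unset Strict Implicit. Unset Printing Implicit Defensive.
Import GRing.Theory.
Local Open Scope ring_scope.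

(* Write d = 2m - 3k (odd) and e = 2k - m, so that k = d + 2e and m = 2d + 3e.
   Codes on disjoint sets of buckets combine by adding all their parameters, and
   a code of length n0 gives one of length n0 * q by tensoring every bucket with
   the identity of size q.  It therefore suffices to take e copies of the code
   x_L, x_R, x_L + x_R (k = 2, m = 3, N = 3n/2) together with a code with k = d,
   m = 2d and N = (d + 1)n/2.  For d = 2p + 3 the latter lives on the complete
   graph on Z_d: bucket a stores x_a and bucket c stores x_a + x_b for the p + 1
   edges {a, b} with a + b = 2c.  To read x_v, the j-th recovery set is bucket j
   together with the edge {v, j}, read at its midpoint (v + j)/2.  For d = 1 two
   systematic buckets suffice. *)

Lemma partition_fibers (T K : finType) (g : T -> K) :
    (forall j, exists x, g x = j) ->
  partition [set [set x | g x == j] | j : K] [set: T] /\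
  #|[set [set x | g x == j] | j : K]| = #|K|.
Proof.
move=> g_onto; have fiber_inj : injective (fun j => [set x | g x == j]).
  move=> j j' /setP eq_fib; have [x gx] := g_onto j.
  by have := eq_fib x; rewrite !inE gx eqxx => /esym/eqP.
split; last by rewrite card_imset.
apply/and3P; split.
- apply/eqP/setP => x; rewrite inE; apply/bigcupP.
  by exists [set y | g y == g x]; rewrite ?imset_f ?inE.
- apply/trivIsetP => _ _ /imsetP[j _ ->] /imsetP[j' _ ->] neq.
  apply/pred0P => x /=; rewrite !inE; apply/andP => -[/eqP gj /eqP gj'].
  by move: neq; rewrite -gj -gj' eqxx.
- apply/imsetP => -[j _ /setP fib0]; have [x gx] := g_onto j.
  by have := fib0 x; rewrite !inE gx eqxx.
Qed.

Lemma tensmx_suml (R : pzRingType) (I : finType) (P : pred I) m1 n1 m2 n2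
    (A : I -> 'M[R]_(m1, n1)) (B : 'M[R]_(m2, n2)) :
  (\sum_(l | P l) A l) *t B = \sum_(l | P l) (A l *t B).
Proof.
apply/matrixP => a b; rewrite !mxE !summxE mulr_suml.
by apply: eq_bigr => l _; rewrite !mxE.
Qed.

Lemma tens_delta_mx (R : pzRingType) m1 n1 m2 n2
    (i1 : 'I_m1) (j1 : 'I_n1) (i2 : 'I_m2) (j2 : 'I_n2) :
  delta_mx i1 j1 *t delta_mx i2 j2 =
    delta_mx (mxtens_index (i1, i2)) (mxtens_index (j1, j2)) :> 'M[R]_(_, _).
Proof.
apply/matrixP => a b.
case: (mxtens_indexP a) => a1 a2; case: (mxtens_indexP b) => b1 b2.
rewrite tensmxE !mxE !(can_eq (@mxtens_indexK _ _)) !xpair_eqE.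
by rewrite -natrM mulnb andbACA.
Qed.

Section PIRCode.
Variable F : finFieldType.

Section Buckets.
Variables (n : nat) (I : finType) (Nb : I -> nat) (G : forall l, 'M[F]_(n, Nb l)).

(* The recovery sets are the fibers of g; as delta_mx i 0 != 0 none of them is
   empty, so they partition the buckets into #|K| sets. *)
Definition PIR_query (K : finType) (i : 'I_n) :=
  exists (g : I -> K) (f : forall l, 'cV[F]_(Nb l)),
    forall j, \sum_(l | g l == j) G l *m f l = delta_mx i 0.

Definition PIR_code (K : finType) :=
  (forall l, (0 < Nb l)%N) /\ forall i, PIR_query K i.

End Buckets.

Definition has_PIR_code (n N k m : nat) :=
  exists (I K : finType) (Nb : I -> nat) (G : forall l, 'M[F]_(n, Nb l)),
    [/\ PIR_code G K, #|I| = m, #|K| = k & (\sum_l Nb l)%N = N].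

Lemma PIR_query_recovers n m (Nb : 'I_m -> nat) (G : forall l, 'M[F]_(n, Nb l))
    (K : finType) i :
  PIR_query G K i -> PIR_recovers #|K| G i.
Proof.
move=> [g [f query_i]].
have g_onto j : exists l, g l = j.
  have /existsP[l /eqP <-] : [exists l, g l == j]; last by exists l.
  apply: contraT; rewrite negb_exists => /forallP no_l.
  have := query_i j; rewrite big_pred0 => [/matrixP/(_ i 0)|l].
    by rewrite !mxE !eqxx => /eqP; rewrite eq_sym oner_eq0.
  exact/negbTE/no_l.
have [P_part P_card] := partition_fibers g_onto.
exists [set [set l | g l == j] | j : K]; split=> //; exists f.
move=> _ /imsetP[j _ ->]; exists (fun=> 1) => x.
have -> : x 0 i = (x *m (delta_mx i 0 : 'cV_n)) 0 0 by rewrite -colE mxE.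
rewrite -(query_i j) mulmx_sumr summxE; apply: eq_big => [l|l _]; first by rewrite inE.
by rewrite mul1r mulmxA.
Qed.

Lemma PIR_code_reindex n (I J K : finType) (Nb : I -> nat)
    (G : forall l, 'M[F]_(n, Nb l)) (h : J -> I) :
  bijective h -> PIR_code G K -> PIR_code (fun l => G (h l)) K.
Proof.
move=> h_bij [Nb_gt0 query]; split=> [l|i]; first exact: Nb_gt0.
have [g [f query_i]] := query i; exists (g \o h), (fun l => f (h l)) => j.
by rewrite -(query_i j) (reindex h) //; apply: onW_bij.
Qed.

Lemma has_PIR_code_array n N k m :
  has_PIR_code n N k m ->
  exists (Nb : 'I_m -> nat) (G : forall l, 'M[F]_(n, Nb l)),
    is_PIR_array_code k G /\ total_size Nb = N.
Proof.
move=> [I [K [Nb [G [[Nb_gt0 query] cardI <- <-]]]]].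
pose h (l : 'I_m) := enum_val (cast_ord (esym cardI) l).
have h_bij : bijective h.
  by exists (fun l => cast_ord cardI (enum_rank l)) => l;
    rewrite /h ?enum_valK ?cast_ordK ?cast_ordKV ?enum_rankK.
have [hNb_gt0 hquery] := PIR_code_reindex h_bij (conj Nb_gt0 query).
exists (fun l => Nb (h l)), (fun l => G (h l)); split.
  by split=> // i; exact: PIR_query_recovers (hquery i).
by rewrite /total_size [RHS](reindex h) //; apply: onW_bij.
Qed.

Lemma has_PIR_code_sum n N1 N2 k1 k2 m1 m2 :
  has_PIR_code n N1 k1 m1 -> has_PIR_code n N2 k2 m2 ->
  has_PIR_code n (N1 + N2) (k1 + k2) (m1 + m2).
Proof.
move=> [I1 [K1 [Nb1 [G1 [[Nb1_gt0 query1] <- <- <-]]]]].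
move=> [I2 [K2 [Nb2 [G2 [[Nb2_gt0 query2] <- <- <-]]]]].
pose Nb l := match l with inl a => Nb1 a | inr b => Nb2 b end.
pose G l : 'M_(n, Nb l) := match l with inl a => G1 a | inr b => G2 b end.
exists (I1 + I2)%type, (K1 + K2)%type, Nb, G.
split; rewrite ?card_sum ?big_sumType //.
split=> [[a|b] /=|i]; [exact: Nb1_gt0 | exact: Nb2_gt0 |].
have [g1 [f1 query1_i]] := query1 i; have [g2 [f2 query2_i]] := query2 i.
pose g l := match l with inl a => inl (g1 a) | inr b => inr (g2 b) end.
pose f l : 'cV_(Nb l) := match l with inl a => f1 a | inr b => f2 b end.
exists g, f => -[j|j]; rewrite big_sumType /=.
- by rewrite [X in _ + X]big_pred0 // addr0 -(query1_i j); exact: eq_bigl.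
- by rewrite [X in X + _]big_pred0 // add0r -(query2_i j); exact: eq_bigl.
Qed.

Lemma has_PIR_code_copies e n N k m :
  has_PIR_code n N k m -> has_PIR_code n (e * N) (e * k) (e * m).
Proof.
move=> [I [K [Nb [G [[Nb_gt0 query] <- <- <-]]]]].
exists ('I_e * I)%type, ('I_e * K)%type, (fun l => Nb l.2), (fun l => G l.2).
split; rewrite ?card_prod ?card_ord //; last first.
  by rewrite -(pair_bigA _ (fun=> Nb)) /= sum_nat_const card_ord.
split=> [l|i]; first exact: Nb_gt0.
have [g [f query_i]] := query i.
exists (fun l => (l.1, g l.2)), (fun l => f l.2) => -[t j].
rewrite -(query_i j); transitivity (\sum_(s | s == t) \sum_(a | g a == j) G a *m f a).
  by rewrite pair_big_dep; apply: eq_bigl => -[s a].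
by rewrite big_pred1_eq.
Qed.

Lemma has_PIR_code_tensor q n N k m :
  (0 < q)%N -> has_PIR_code n N k m -> has_PIR_code (n * q) (N * q) k m.
Proof.
move=> q_gt0 [I [K [Nb [G [[Nb_gt0 query] <- <- <-]]]]].
exists I, K, (fun l => Nb l * q)%N, (fun l => G l *t (1%:M : 'M_q)).
split; rewrite -?big_distrl //; split=> [l|i]; first by rewrite muln_gt0 Nb_gt0.
case: (mxtens_indexP i) => i0 t; have [g [f query_i0]] := query i0.
exists g, (fun l => f l *t (delta_mx t 0 : 'cV_q)) => j.
rewrite (eq_bigr (fun l => (G l *m f l) *t (delta_mx t 0 : 'cV_q))) => [|l _];
  last first.
  by rewrite (tensmx_mul (r:=1) (s:=1)) mul1mx.
by rewrite -tensmx_suml query_i0 tens_delta_mx [X in delta_mx _ X]ord1.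
Qed.

Lemma systematic_code n : has_PIR_code n n 1 n.
Proof.
exists 'I_n, unit, (fun=> 1%N), (fun l => delta_mx l 0 : 'cV[F]_n).
split; rewrite ?sum1_card ?card_ord ?card_unit //; split=> // i.
exists (fun=> tt), (fun l => ((l == i)%:R)%:M) => -[].
under eq_bigr do rewrite mul_mx_scalar.
rewrite (bigD1 i) //= eqxx scale1r big1 ?addr0 // => l /negbTE->.
by rewrite scale0r.
Qed.

Lemma parity_code n : has_PIR_code n n.+1 2 n.+1.
Proof.
pose G (l : 'I_n + unit) : 'cV[F]_n :=
  if l is inl a then delta_mx a 0 else \sum_a delta_mx a 0.
exists ('I_n + unit)%type, bool, (fun=> 1%N), G.
split; rewrite ?sum1_card ?card_sum ?card_ord ?card_unit ?card_bool ?addn1 //.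
split=> // i.
pose g (l : 'I_n + unit) := if l is inl a then a == i else false.
pose f (l : 'I_n + unit) : 'cV[F]_1 := if g l || (l == inr tt) then 1 else -1.
exists g, f => -[]; rewrite big_sumType /=.
  rewrite [X in _ + X]big_pred0 // addr0 (big_pred1 i) => [|a]; last exact: eqb_id.
  by rewrite /f /= eqxx mulmx1.
rewrite (big_pred1 tt) => [|[] //]; rewrite /f /= mulmx1.
rewrite (eq_big (fun a => a != i) (fun a => - delta_mx a 0)) => [|a|a].
- by rewrite sumrN [\sum_(a < n) _](bigD1 i) //= addrCA addNr addr0.
- exact: eqbF_neg.
- by rewrite eqbF_neg => /negbTE->; rewrite mulmxN mulmx1.
Qed.

Section CompleteGraph.
Variable p : nat.
Local Notation d := p.*2.+3.
Local Notation V := 'I_d.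

Definition half : V := p.+2%:R.

Lemma natr_d_eq0 : d%:R = 0 :> V.
Proof. by apply: val_inj; rewrite Zp_nat /= modnn. Qed.

Lemma mulrn2_eq (x y : V) : (x *+ 2 == y) = (x == y * half).
Proof.
have half2 : half *+ 2 = 1.
  rewrite /half -mulrnA (_ : (p.+2 * 2)%N = d.+1); last by lia.
  by rewrite mulrSr natr_d_eq0 add0r.
apply/eqP/eqP => [<- | ->]; rewrite -mulr_natr -mulrA.
  by rewrite mulr_natl half2 mulr1.
by rewrite mulr_natr half2 mulr1.
Qed.

Definition parity_bucket (c : V) : 'M[F]_(d, p.+1) :=
  \matrix_(r, s) ((r == c + s.+1%:R)%:R + (r == c - s.+1%:R)%:R).

Lemma parity_bucket_col c (s : 'I_p.+1) :
  parity_bucket c *m (delta_mx s 0 : 'cV_p.+1) =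
    delta_mx (c + s.+1%:R) 0 + delta_mx (c - s.+1%:R) 0.
Proof. by apply/matrixP => r z; rewrite -colE [z]ord1 !mxE !andbT. Qed.

Lemma parity_bucket_pair c (delta : V) : delta != 0 ->
  exists w : 'cV_p.+1,
    parity_bucket c *m w = delta_mx (c + delta) 0 + delta_mx (c - delta) 0.
Proof.
rewrite -val_eqE /= => delta_neq0; case: (leqP delta p.+1) => delta_le.
  have s_lt : (delta.-1 < p.+1)%N by lia.
  exists (delta_mx (Ordinal s_lt) 0); rewrite parity_bucket_col /= prednK ?natr_Zp //.
  by rewrite lt0n.
have s_lt : ((d - delta).-1 < p.+1)%N by have := ltn_ord delta; lia.
exists (delta_mx (Ordinal s_lt) 0); rewrite parity_bucket_col /= prednK; last first.
  by rewrite subn_gt0.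
by rewrite natrB ?natr_Zp 1?ltnW // natr_d_eq0 sub0r opprK addrC.
Qed.

Lemma complete_graph_code : has_PIR_code d (d * p.+2) d (d + d).
Proof.
pose Nb (l : V + V) := if l is inl _ then 1%N else p.+1.
pose G l : 'M_(d, Nb l) :=
  match l with inl a => delta_mx a 0 | inr c => parity_bucket c end.
exists (V + V)%type, V, Nb, G; split; rewrite ?card_sum ?card_ord //; last first.
  by rewrite big_sumType /= sum1_card sum_nat_const !card_ord; lia.
split=> [[] //|v].
have pair_c c : exists x : 'cV_p.+1,
    parity_bucket c *m x = if c == v then 0 else delta_mx v 0 + delta_mx (c *+ 2 - v) 0.
  case: eqVneq => [_|c_neq_v]; first by exists 0; rewrite mulmx0.
  have [|x pair_x] := @parity_bucket_pair c (v - c); first by rewrite subr_eq0 eq_sym.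
  by exists x; rewrite pair_x [c + _]addrC subrK opprB addrA mulr2n.
have [w w_pair] := fin_all_exists pair_c.
pose g l := match l with inl a => a | inr c => c *+ 2 - v end.
pose f l : 'cV_(Nb l) :=
  match l with inl a => if a == v then 1 else -1 | inr c => w c end.
exists g, f => j; rewrite big_sumType /= big_pred1_eq.
pose c0 := (j + v) * half.
rewrite (big_pred1 c0) => [|c]; last by rewrite /= subr_eq mulrn2_eq.
have c0_double : c0 *+ 2 = j + v by apply/eqP; rewrite mulrn2_eq.
rewrite w_pair.
case: eqVneq => [j_eq_v|j_neq_v].
  have -> : c0 == v by rewrite /c0 j_eq_v eq_sym -mulrn2_eq mulr2n.
  by rewrite mulmx1 addr0 j_eq_v.
have -> : (c0 == v) = false.
  apply/negP => /eqP c0_v; move: c0_double; rewrite c0_v mulr2n => /addIr v_j.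
  by rewrite v_j eqxx in j_neq_v.
by rewrite c0_double addrK mulmxN mulmx1 addrCA addNr addr0.
Qed.

End CompleteGraph.

Lemma odd_base_code d h :
  odd d -> (d %| 2 * h)%N -> (0 < h)%N -> has_PIR_code (2 * h) (d.+1 * h) d (d + d).
Proof.
move=> d_odd /dvdnP[q n_eq] h_gt0.
have [p d_eq] : exists p, d = p.*2.+1.
  by exists d./2; rewrite -[LHS]odd_double_half d_odd.
move: n_eq; rewrite {}d_eq; case: p => [|p] n_eq.
  exact: has_PIR_code_tensor h_gt0 (systematic_code 2).
have q_gt0 : (0 < q)%N by case: q n_eq => //; rewrite mul0n; lia.
have := has_PIR_code_tensor q_gt0 (complete_graph_code p).
rewrite !doubleS in n_eq *.
have N_eq : (p.*2.+4 * h = p.*2.+3 * p.+2 * q)%N.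
  rewrite (_ : p.*2.+4 * h = p.+2 * (2 * h))%N; last by rewrite -mul2n; ring.
  by rewrite n_eq; ring.
by rewrite N_eq n_eq (mulnC q).
Qed.
End PIRCode.

Theorem corollary4p10 (F : finFieldType) (n k m : nat) :
  (0 < n)%N -> (0 < k)%N -> (0 < m)%N ->
  (3 * k < 2 * m)%N -> (m < 2 * k)%N ->
  odd (2 * m - 3 * k) ->
  (lcmn (4 * m - 6 * k) (4 * k - 2 * m) %| n)%N ->
  exists (Nb : 'I_m -> nat) (G : forall l : 'I_m, 'M[F]_(n, Nb l)),
    is_PIR_array_code k G /\
    (2 * total_size Nb <= (3 * k - m + 1) * n)%N.
Proof.
move=> n_gt0 _ _ km_lt mk_lt.
have [d d_eq] : {d | d = 2 * m - 3 * k}%N by eexists.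
have [e e_eq] : {e | e = 2 * k - m}%N by eexists.
have dd_eq : (4 * m - 6 * k = 2 * d)%N by lia.
have k_eq : (d + e * 2 = k)%N by lia.
have m_eq : (d + d + e * 3 = m)%N by lia.
have N_eq : (3 * k - m + 1 = d.+1 + e * 3)%N by lia.
rewrite -d_eq dd_eq => d_odd lcm_dvd_n.
have dd_dvd_n : (2 * d %| n)%N := dvdn_trans (dvdn_lcml _ _) lcm_dvd_n.
have [h n_eq] : exists h, n = (2 * h)%N.
  have /dvdnP[h ->] := dvdn_trans (dvdn_mulr d (dvdnn 2)) dd_dvd_n.
  by exists h; rewrite mulnC.
have h_gt0 : (0 < h)%N by rewrite n_eq muln_gt0 in n_gt0.
have d_dvd : (d %| 2 * h)%N.
  by rewrite -n_eq; apply: dvdn_trans dd_dvd_n; apply: dvdn_mull.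
have := has_PIR_code_sum (odd_base_code F d_odd d_dvd h_gt0)
  (has_PIR_code_copies e (has_PIR_code_tensor h_gt0 (parity_code F 2))).
rewrite k_eq m_eq -n_eq => /has_PIR_code_array[Nb [G [code size]]].
exists Nb, G; split=> //; rewrite size N_eq n_eq; apply: eq_leq; ring.
Qed.
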